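(* Let $G$ be a finite group of order $2^n$ with $n\ge2$, having normal subgroups $H_1$ and $H_2$ such that $G/H_1\cong(\mathbb{Z}/2\mathbb{Z})^{\oplus(n-2)}$ and $G/H_2\cong\mathbb{Z}/4\mathbb{Z}$. Then every subgroup of $H_1$ is normal in $G$. *)

From mathcomp Require Import all_boot all_order all_algebra all_fingroup all_solvable.
Set Implicit Arguments. Unset Strict Implicit. Unset Printing Implicit Defensive.

Definition Z2pow (k : nat) := 'rV['Z_2]_k.
Definition Z2pow_group (k : nat) : {group Z2pow k} := [set: Z2pow k]%G.
Definition Z4_group : {group 'Z_4} := [set: 'Z_4]%G.

From mathcomp Require Import all_boot all_order all_algebra all_fingroup all_solvable.

(* As G/H1 is elementary abelian of order 2^(n-2), H1 has order 4 and contains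
   every square of G; as G/H2 is cyclic of order 4, some square g^2 lies outside
   H2.  Both quotients are abelian, so G' lies in N = H1 :&: H2, a proper
   subgroup of H1, hence of order at most 2, hence central.  Then
   [g^2, y] = [g, y]^2 = 1, so g^2 is central and H1 :&: Z(G) properly contains
   N.  Either N = 1, so G' = 1 and G is abelian, or |N| = 2 and H1 :&: Z(G) has
   order 4.  In both cases H1 is central, so all its subgroups are normal. *)

Set Implicit Arguments.
Unset Strict Implicit.
Unset Printing Implicit Defensive.

Local Open Scope group_scope.

Section CentralSubgroups.

Variable gT : finGroupType.
Implicit Types G H A B N : {group gT}.

Lemma exponent_quotient_dvdnP G H m :
  G \subset 'N(H) -> reflect {in G, forall x, x ^+ m \in H} (exponent (G / H) %| m).
Proof.
move=> nHG; apply: (iffP exponentP) => [expm x Gx | mH _ /morphimP[x Nx Gx ->]].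
  apply: coset_idr; first by rewrite groupX ?(subsetP nHG).
  by rewrite morphX ?(subsetP nHG) // expm ?mem_quotient.
by rewrite -morphX //= coset_id ?mH.
Qed.

Lemma card_normal_quotient_isog (rT : finGroupType) G H (R : {group rT}) :
  H <| G -> G / H \isog R -> #|G| = (#|H| * #|R|)%N.
Proof. by case/andP=> sHG nHG /card_isog <-; rewrite card_quotient // Lagrange. Qed.

Lemma normal_card_le2_sub_center G N : N <| G -> #|N| <= 2 -> N \subset 'Z(G).
Proof.
case/andP=> sNG nNG cardN; rewrite subsetI sNG; apply/centsP=> c Nc y Gy.
have [-> | ntc] := eqVneq c 1; first exact/commute_sym/commute1.
have /card_le1_eqP eqN1 : #|N :\ 1| <= 1 by move: cardN; rewrite (cardsD1 1) group1.
by apply/commgP/conjg_fixP/eqN1; rewrite !inE ?conjg_eq1 ntc ?memJ_norm ?(subsetP nNG).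
Qed.

Lemma expn_sub_center G n x :
  G^`(1) \subset 'Z(G) -> exponent G^`(1) %| n -> x \in G -> x ^+ n \in 'Z(G).
Proof.
move=> ZG' expG'n Gx; rewrite inE groupX //=; apply/centP=> y Gy.
have G'xy : [~ x, y] \in G^`(1) by rewrite mem_commg.
have /centP cxy := subsetP (subset_trans ZG' (subsetIr _ _)) _ G'xy.
by apply/commgP; rewrite commXg ?(exponentP expG'n) //; apply/commute_sym/cxy.
Qed.

Lemma proper_card_dvdn_prime p A B :
  prime p -> #|A| = (p ^ 2)%N -> B \proper A -> #|B| %| p.
Proof.
move=> p_pr cardA pBA; have := proper_card pBA; have := cardSg (proper_sub pBA).
rewrite cardA => /(dvdn_pfactor _ _ p_pr)[i _ ->].
rewrite ltn_exp2l ?prime_gt1 // -[X in _ %| X]expn1 => lt_i1.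
exact: dvdn_exp2l.
Qed.

Lemma sub_center_of_order_prime_sq p G A B :
    prime p -> #|A| = (p ^ 2)%N -> A \subset G ->
  G^`(1) \subset B -> B \proper A :&: 'Z(G) -> A \subset 'Z(G).
Proof.
move=> p_pr cardA sAG sG'B pB_AZ.
have [B1 | ntB] := eqsVneq B 1.
  by have /center_idP-> : abelian G by apply/derG1P/trivgP; rewrite -B1.
apply: contraT => nsAZ.
have pAZ_A : A :&: 'Z(G) \proper A.
  by rewrite properEneq subsetIl andbT; apply: contraNneq nsAZ => <-; apply: subsetIr.
have dvdAZp := proper_card_dvdn_prime p_pr cardA pAZ_A.
have cardB : #|B| = p.
  apply/(prime_nt_dvdP p_pr)/(dvdn_trans (cardSg (proper_sub pB_AZ)) dvdAZp).
  by rewrite -(trivg_card1 B).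
by have := proper_card pB_AZ; rewrite ltnNge cardB dvdn_leq ?prime_gt0.
Qed.

End CentralSubgroups.

Lemma card_Z2pow k : #|Z2pow_group k| = (2 ^ k)%N.
Proof. by rewrite cardsT card_mx card_ord mul1n. Qed.

Lemma abelem_Z2pow k : 2.-abelem (Z2pow_group k).
Proof. exact: fin_lmod_pchar_abelem. Qed.

Lemma exponent_Z4 : exponent Z4_group = 4.
Proof. by rewrite exponent_cyclic ?cardsT ?card_ord //= Zp_cycle cycle_cyclic. Qed.

Theorem lemma4p2 (gT : finGroupType) (G H1 H2 : {group gT}) (n : nat) :
  (2 <= n)%N -> #|G| = (2 ^ n)%N ->
  (H1 <| G)%g -> (H2 <| G)%g ->
  ((G / H1)%g \isog Z2pow_group (n - 2))%g ->
  ((G / H2)%g \isog Z4_group)%g ->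
  forall K : {group gT}, (K \subset H1)%g -> (K <| G)%g.
Proof.
move=> n_ge2 cardG nsH1G nsH2G isoH1 isoH2 K sKH1.
have [sH1G nH1G] := andP nsH1G; have nH2G := normal_norm nsH2G.
have /andP[abGH1 expGH1] : abelian (G / H1) && (exponent (G / H1) %| 2).
  by rewrite -abelemE // (isog_abelem isoH1) abelem_Z2pow.
have cardH1 : #|H1| = (2 ^ 2)%N.
  move: (card_normal_quotient_isog nsH1G isoH1).
  rewrite cardG card_Z2pow -{1}(subnK n_ge2) expnD mulnC => /eqP.
  by rewrite eqn_pmul2r ?expn_gt0 // eq_sym => /eqP.
have sqH1 : {in G, forall x, x ^+ 2 \in H1} by apply/exponent_quotient_dvdnP.
have [g Gg g2H2] : exists2 g, g \in G & g ^+ 2 \notin H2.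
  apply/exists_inP; rewrite -negb_forall_in; apply/negP.
  move=> /forall_inP/(exponent_quotient_dvdnP _ nH2G).
  by rewrite (exponent_isog isoH2) exponent_Z4.
have sG'N : G^`(1) \subset H1 :&: H2.
  by rewrite subsetI !der1_min // (isog_abelian isoH2) FinRing.zmod_abelian.
have pNH1 : H1 :&: H2 \proper H1.
  apply/properP; split; first exact: subsetIl.
  by exists (g ^+ 2); rewrite ?in_setI ?sqH1 ?(negbTE g2H2).
have cardN := proper_card_dvdn_prime (isT : prime 2) cardH1 pNH1.
have ZN : H1 :&: H2 \subset 'Z(G).
  by apply: normal_card_le2_sub_center (normalI nsH1G nsH2G) (dvdn_leq _ cardN).
have Zg2 : g ^+ 2 \in 'Z(G).
  apply: expn_sub_center Gg; first exact: subset_trans ZN.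
  exact: dvdn_trans (exponent_dvdn _) (dvdn_trans (cardSg sG'N) cardN).
apply/sub_center_normal/(subset_trans sKH1).
apply: (sub_center_of_order_prime_sq _ cardH1 sH1G sG'N) => //.
apply/properP; split; first by rewrite subsetI subsetIl.
by exists (g ^+ 2); rewrite in_setI ?sqH1 ?Zg2 ?(negbTE g2H2) ?andbF.
Qed.
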